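(* Let $H$ be a connected, locally finite graph and let $S\subseteq\{0\}\times V(H)$ be a resolving set of $P_\infty\,\Box\, H$. Then for every $u\in V(H)$, the set $S\cup\{(1,u)\}$ is a resolving set of $P_{2\infty}\,\Box\, H$.
   Context: $P_\infty$ has vertex set $\mathbb N=\{0,1,2,\dots\}$ and $P_{2\infty}$ has vertex set $\mathbb Z$; in both, $i,j$ are adjacent iff $|i-j|=1$. The cartesian product $G\Box H$ has vertex set $V(G)\times V(H)$, where $(a,v)$ is adjacent to $(b,w)$ iff either $a=b$ and $vw\in E(H)$, or $v=w$ and $ab\in E(G)$; thus $d_{G\Box H}((a,v),(b,w))=d_G(a,b)+d_H(v,w)$. A vertex $x$ resolves $u,v$ if $d(u,x)\ne d(v,x)$; a set of vertices is a resolving set if every pair of distinct vertices is resolved by some vertex of it. *)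

From Stdlib Require Import ZArith List.
Open Scope Z_scope.

Inductive walk {X : Type} (adj : X -> X -> Prop) : X -> X -> nat -> Prop :=
| walk_nil : forall x, walk adj x x 0
| walk_cons : forall x y z n, adj x y -> walk adj y z n -> walk adj x z (S n).

Definition is_dist {X : Type} (adj : X -> X -> Prop) (x y : X) (d : nat) : Prop :=
  walk adj x y d /\ forall m, walk adj x y m -> (d <= m)%nat.

Definition simple_graph {X : Type} (adj : X -> X -> Prop) : Prop :=
  (forall x y, adj x y -> adj y x) /\ (forall x, ~ adj x x).

Definition connected {X : Type} (adj : X -> X -> Prop) : Prop :=
  forall x y, exists n, walk adj x y n.

Definition locally_finite {X : Type} (adj : X -> X -> Prop) : Prop :=
  forall x, exists l : list X, forall y, adj x y -> In y l.

Definition resolves {X : Type} (adj : X -> X -> Prop) (x u v : X) : Prop :=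
  exists du dv, is_dist adj u x du /\ is_dist adj v x dv /\ du <> dv.

Definition resolving_set {X : Type} (adj : X -> X -> Prop) (W : X -> Prop) : Prop :=
  forall u v, u <> v -> exists x, W x /\ resolves adj x u v.

(* P_infty on nat, P_{2 infty} on Z *)
Definition P_inf_adj (i j : nat) : Prop := S i = j \/ S j = i.
Definition P_2inf_adj (i j : Z) : Prop := i + 1 = j \/ j + 1 = i.

Definition box {A B : Type} (adjG : A -> A -> Prop) (adjH : B -> B -> Prop)
  (p q : A * B) : Prop :=
  (fst p = fst q /\ adjH (snd p) (snd q)) \/ (snd p = snd q /\ adjG (fst p) (fst q)).

(* Folding Z onto
   N by a |-> |a| is a graph homomorphism P_2oo [] H -> P_oo [] H, and
   unfolding N back to either half of Z is a homomorphism the other way; both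
   fix the layer 0, so distances to a vertex (0,s) are the same upstairs and
   downstairs ([folded_dist_to_layer0]).  Hence if the folded vertices
   (|a|,v), (|b|,w) differ, the vertex of S resolving them still resolves
   (a,v), (b,w).  Otherwise (b,w) = (-a,v) with a <> 0; since distances in the
   product add up ([box_Z_dist]), the distances to (1,u) are |a-1| + d_H(v,u)
   and |a+1| + d_H(v,u), which differ ([opposite_layers_resolved]). *)

From Stdlib Require Import ZArith List Lia Classical.

Definition graph_hom {X Y : Type} (adjX : X -> X -> Prop) (adjY : Y -> Y -> Prop)
  (f : X -> Y) : Prop :=
  forall x y, adjX x y -> adjY (f x) (f y).

Lemma walk_map {X Y : Type} (adjX : X -> X -> Prop) (adjY : Y -> Y -> Prop) (f : X -> Y) :
  graph_hom adjX adjY f -> forall x y n, walk adjX x y n -> walk adjY (f x) (f y) n.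
Proof.
  intros Hf x y n W; induction W; econstructor; eauto.
Qed.

Section Walks.
Context {X : Type} (adj : X -> X -> Prop).

Lemma walk_app x y n z m : walk adj x y n -> walk adj y z m -> walk adj x z (n + m).
Proof.
  intros W; revert z m; induction W; intros; simpl; auto.
  econstructor; eauto.
Qed.

Lemma dist_exists x y n : walk adj x y n -> exists d, is_dist adj x y d.
Proof.
  induction n as [n IH] using (well_founded_induction lt_wf); intros W.
  destruct (classic (exists m, (m < n)%nat /\ walk adj x y m)) as [[m [Hm Wm]]|Hmin].
  - exact (IH m Hm Wm).
  - exists n; split; auto. intros m Wm.
    destruct (Nat.le_gt_cases n m); auto. exfalso; eauto.
Qed.

Lemma is_dist_transfer {Y : Type} (adjY : Y -> Y -> Prop) (f : X -> Y) (g : Y -> X)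
  x1 x2 y1 y2 d :
  graph_hom adj adjY f -> graph_hom adjY adj g ->
  f x1 = y1 -> f x2 = y2 -> g y1 = x1 -> g y2 = x2 ->
  is_dist adjY y1 y2 d -> is_dist adj x1 x2 d.
Proof.
  intros Hf Hg F1 F2 G1 G2 [W M]; split.
  - rewrite <- G1, <- G2. exact (walk_map _ _ g Hg _ _ _ W).
  - intros m Wm. apply M. rewrite <- F1, <- F2. exact (walk_map _ _ f Hf _ _ _ Wm).
Qed.

End Walks.

Section Product.
Context {V : Type} (adjH : V -> V -> Prop).

Lemma box_hom {A A' : Type} (adjG : A -> A -> Prop) (adjG' : A' -> A' -> Prop)
  (phi : A -> A') :
  graph_hom adjG adjG' phi ->
  graph_hom (box adjG adjH) (box adjG' adjH) (fun p => (phi (fst p), snd p)).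
Proof.
  intros Hphi p q [[E Hadj]|[E Hadj]]; [left|right]; simpl; rewrite E; auto.
Qed.

Lemma fold_hom : graph_hom P_2inf_adj P_inf_adj Z.abs_nat.
Proof. unfold graph_hom, P_2inf_adj, P_inf_adj; lia. Qed.

Lemma unfold_hom (neg : bool) :
  graph_hom P_inf_adj P_2inf_adj
    (fun i => if neg then (- Z.of_nat i)%Z else Z.of_nat i).
Proof. unfold graph_hom, P_2inf_adj, P_inf_adj; destruct neg; lia. Qed.

Lemma folded_dist_to_layer0 a v s d :
  is_dist (box P_inf_adj adjH) (Z.abs_nat a, v) (0%nat, s) d ->
  is_dist (box P_2inf_adj adjH) (a, v) (0%Z, s) d.
Proof.
  apply (is_dist_transfer _ _ _
           (fun p => (if Z.ltb a 0 then (- Z.of_nat (fst p))%Z else Z.of_nat (fst p), snd p))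
           _ _ _ _ _ (box_hom _ _ _ fold_hom) (box_hom _ _ _ (unfold_hom _))); simpl;
    f_equal; destruct (Z.ltb_spec a 0); lia.
Qed.

Lemma walk_in_layer z v w k :
  walk adjH v w k -> walk (box P_2inf_adj adjH) (z, v) (z, w) k.
Proof.
  apply (walk_map adjH _ (fun v => (z, v))). intros x y A; left; auto.
Qed.

Lemma walk_along_path v n : forall x y, Z.abs_nat (x - y) = n ->
  walk (box P_2inf_adj adjH) (x, v) (y, v) n.
Proof.
  induction n as [|n IH]; intros x y Hn.
  - replace y with x by lia. constructor.
  - set (x' := if Z.ltb x y then (x + 1)%Z else (x - 1)%Z).
    apply walk_cons with (y := (x', v)).
    + right; simpl; split; auto. unfold P_2inf_adj, x'; destruct (Z.ltb_spec x y); lia.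
    + apply IH. unfold x'; destruct (Z.ltb_spec x y); lia.
Qed.

Lemma walk_project p q m : walk (box P_2inf_adj adjH) p q m ->
  exists k, walk adjH (snd p) (snd q) k /\ (Z.abs_nat (fst p - fst q) + k <= m)%nat.
Proof.
  intros W; induction W as [x|x y z n A W IH].
  - exists 0%nat; split; [constructor|lia].
  - destruct IH as [k [Wk Hk]].
    destruct A as [[E A]|[E A]].
    + exists (S k); split; [econstructor; eauto|]. rewrite E; lia.
    + exists k; split; [rewrite E; auto|]. unfold P_2inf_adj in A; lia.
Qed.

Lemma box_Z_dist x y v w k :
  is_dist adjH v w k ->
  is_dist (box P_2inf_adj adjH) (x, v) (y, w) (Z.abs_nat (x - y) + k).
Proof.
  intros [Wk Mk]; split.
  - apply walk_app with (y := (y, v)).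
    + apply walk_along_path; reflexivity.
    + apply walk_in_layer; exact Wk.
  - intros m Wm. destruct (walk_project _ _ _ Wm) as [k' [Wk' Hk']].
    specialize (Mk _ Wk'). simpl in Hk'. lia.
Qed.

Lemma folded_resolves a v b w s :
  resolves (box P_inf_adj adjH) (0%nat, s) (Z.abs_nat a, v) (Z.abs_nat b, w) ->
  resolves (box P_2inf_adj adjH) (0%Z, s) (a, v) (b, w).
Proof.
  intros [du [dv [Du [Dv Hd]]]].
  exists du, dv; split; [|split]; auto using folded_dist_to_layer0.
Qed.

Lemma opposite_layers_resolved a v u :
  connected adjH -> a <> 0%Z -> resolves (box P_2inf_adj adjH) (1%Z, u) (a, v) ((- a)%Z, v).
Proof.
  intros Hconn Ha.
  destruct (Hconn v u) as [n Wn]. destruct (dist_exists _ _ _ _ Wn) as [k Dk].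
  exists (Z.abs_nat (a - 1) + k)%nat, (Z.abs_nat (- a - 1) + k)%nat.
  split; [|split]; [apply box_Z_dist; exact Dk|apply box_Z_dist; exact Dk|lia].
Qed.

End Product.

Theorem lemma8 (V : Type) (adjH : V -> V -> Prop)
  (Hsimple : simple_graph adjH) (Hconn : connected adjH) (Hlf : locally_finite adjH)
  (S : nat * V -> Prop) (HS0 : forall p, S p -> fst p = 0%nat)
  (HSres : resolving_set (box P_inf_adj adjH) S) (u : V) :
  resolving_set (box P_2inf_adj adjH)
    (fun x : Z * V => (exists p, S p /\ x = (Z.of_nat (fst p), snd p)) \/ x = (1%Z, u)).
Proof.
  intros [a v] [b w] Hne.
  destruct (classic ((Z.abs_nat a, v) = (Z.abs_nat b, w))) as [Hfold|Hfold].
  - (* the two vertices are mirror images: (1,u) resolves them *)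
    injection Hfold as Hab Hvw; subst w.
    assert (Hb : b = (- a)%Z) by (assert (a <> b) by congruence; lia).
    subst b. exists (1%Z, u); split; [right; reflexivity|].
    apply opposite_layers_resolved; [exact Hconn|].
    intros ->; apply Hne; reflexivity.
  - (* the folded vertices differ: the vertex of S resolving them works *)
    destruct (HSres _ _ Hfold) as [[n s] [Ss Hres]].
    pose proof (HS0 _ Ss) as Hn; simpl in Hn; subst n.
    exists (0%Z, s); split.
    + left; exists (0%nat, s); split; auto.
    + exact (folded_resolves _ _ _ _ _ _ Hres).
Qed.
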